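(* Let $k\ge2$ be an integer, let $1<p\le\pi^2(k-1/2)^2-1$, and define \[\psi_k(x)=\sin^p(\pi x)\Big(\frac1{(k-x)^p}+\frac1{(k+x-1)^p}\Big).\] Then $\psi_k$ is decreasing on $[1/2,1]$. *)

(* R : realType, real powers via powR (0 `^ p = 0 for p <> 0). *)
From HB Require Import structures.
From mathcomp Require Import all_boot all_order all_algebra.
From mathcomp Require Import all_classical all_reals all_analysis.
Set Implicit Arguments. Unset Strict Implicit. Unset Printing Implicit Defensive.
Import Order.TTheory GRing.Theory Num.Theory.
Local Open Scope ring_scope.

Definition psi (R : realType) (k : nat) (p x : R) : R :=
  (sin (pi * x)) `^ p * (1 / (k%:R - x) `^ p + 1 / (k%:R + x - 1) `^ p).

From HB Require Import structures.
From mathcomp Require Import all_boot all_order all_algebra.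
From mathcomp Require Import all_classical all_reals all_analysis.
From mathcomp Require Import ring lra.
Import Order.TTheory GRing.Theory Num.Theory.
Local Open Scope ring_scope.

(* On (0, 1) write psi as exp (p ln (s/a)) + exp (p ln (s/c)) with s = sin (pi z),
   a = k - z and c = k + z - 1.  Its derivative is
   p (s/c)^p ((c/a)^p (1/a - q) - (q + 1/c)),  where q = pi tan u, u = pi (z - 1/2).
   On (1/2, 1) this is negative: trivially if q a >= 1, and otherwise it amounts to
   (c/a)^(p+1) < (1 + q c)/(1 - q a).  As tan u > u and pi c, pi a = b +- u with
   b = pi (k - 1/2), p + 1 <= b^2, this follows from
   b^2 ln ((b+u)/(b-u)) < ln ((1 + (b+u) u)/(1 - (b-u) u)),
   an equality at u = 0 whose two sides have derivatives in the right order.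
   Finally psi vanishes at 1 and is positive on (0, 1). *)

Section psi_decreasing.
Set Implicit Arguments.
Unset Strict Implicit.
Variable R : realType.

Lemma is_derive_gt0_ltr (f df : R -> R) (a b : R) : a < b ->
  (forall x, a <= x <= b -> is_derive x 1 f (df x)) ->
  (forall x, a < x < b -> 0 < df x) -> f a < f b.
Proof.
move=> ab fdf df_gt0.
have fdf' : forall x, x \in `]a, b[%R -> is_derive x 1 f (df x).
  by move=> x /[!in_itv]/= /andP[ax xb]; apply: fdf; rewrite !ltW.
have [|c /[!in_itv]/= /andP[ac cb]] := MVT ab fdf'.
  apply: derivable_within_continuous => x xab.
  by have [] := fdf x (ltac:(by rewrite !(itvP xab))).
by rewrite -subr_gt0 => ->; rewrite mulr_gt0 ?df_gt0 ?ac ?subr_gt0.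
Qed.

Lemma is_derive_lt0_gtr (f df : R -> R) (a b : R) : a < b ->
  (forall x, a <= x <= b -> is_derive x 1 f (df x)) ->
  (forall x, a < x < b -> df x < 0) -> f b < f a.
Proof.
move=> ab fdf df_lt0; rewrite -ltrN2.
apply: (@is_derive_gt0_ltr (fun x => - f x) (fun x => - df x)) => // x axb.
- by have := fdf x axb; apply: is_deriveN.
- by rewrite oppr_gt0 df_lt0.
Qed.

Lemma is_derive_ln_comp (f : R -> R) (x df : R) : is_derive x 1 f df ->
  0 < f x -> is_derive x 1 (fun y => ln (f y)) (df / f x).
Proof.
move=> fdf fx0; rewrite mulrC.
exact: (is_derive1_comp (is_derive1_ln fx0) fdf).
Qed.

Lemma is_derive_sin_scale (c x : R) :
  is_derive x 1 (fun y => sin (c * y)) (cos (c * x) * c).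
Proof.
apply: is_derive_eq (is_derive1_comp (is_derive_sin _)
  (is_deriveZ c (is_derive_id x 1))) _.
by congr (cos _ * _); apply: mulr1.
Qed.

Lemma is_derive_expR_ln_ratio (f g : R -> R) (p x df dg : R) :
  is_derive x 1 f df -> is_derive x 1 g dg -> 0 < f x -> 0 < g x ->
  is_derive x 1 (fun y => expR (p * (ln (f y) - ln (g y))))
    (expR (p * (ln (f x) - ln (g x))) * (p * (df / f x - dg / g x))).
Proof.
move=> fdf gdg fx_gt0 gx_gt0.
have dlnfg := is_deriveB (is_derive_ln_comp fdf fx_gt0) (is_derive_ln_comp gdg gx_gt0).
exact: (is_derive1_comp (is_derive_expR _) (is_deriveZ p dlnfg)).
Qed.

Lemma mul_cos_lt_sin (u : R) : 0 < u < pi -> u * cos u < sin u.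
Proof.
move=> /andP[u_gt0 u_ltpi].
have : (sin - id * cos) 0 < (sin - id * cos) u :> R.
  apply: (@is_derive_gt0_ltr (sin - id * cos) (fun v => v * sin v) 0 u u_gt0) => v.
    move=> _; apply: is_derive_eq (is_deriveB (is_derive_sin v)
      (is_deriveM (is_derive_id v 1) (is_derive_cos v))) _.
    by change (cos v - (v * - sin v + cos v * 1) = v * sin v); ring.
  by move=> /andP[v0 vu]; rewrite mulr_gt0 // sin_gt0_pi // v0 (lt_trans vu).
by rewrite !fctE sin0 mul0r subr0 subr_gt0.
Qed.

Lemma sqr_mul_ln_ratio_lt (b u : R) : 3 <= b -> 0 < u < 1 / 2 ->
  (b - u) * u < 1 ->
  b ^+ 2 * (ln (b + u) - ln (b - u)) < ln (1 + (b + u) * u) - ln (1 - (b - u) * u).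
Proof.
move=> b_ge3 /andP[u_gt0 u_lt] bu_lt1.
have pos v : 0 <= v <= u ->
    [/\ 0 < b + v, 0 < b - v, 0 < 1 + (b + v) * v & 0 < 1 - (b - v) * v].
  move=> /andP[v_ge0 v_le]; split; [lra | lra | nra |].
  suff : (b - v) * v <= (b - u) * u by lra.
  nra.
pose h v := ln (1 + (b + v) * v) - ln (1 - (b - v) * v)
  - b ^+ 2 * (ln (b + v) - ln (b - v)).
pose dh v := (b + 2 * v) / (1 + (b + v) * v) - (2 * v - b) / (1 - (b - v) * v)
  - b ^+ 2 * (1 / (b + v) - (-1) / (b - v)).
have h0 : h 0 = 0 by rewrite /h !(addr0, subr0, mulr0, subrr).
suff : h 0 < h u by rewrite h0 subr_gt0.
apply: (@is_derive_gt0_ltr h dh 0 u u_gt0) => v.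
  move=> /pos[bv_gt0 bv'_gt0 q_gt0 q'_gt0].
  have dq : is_derive v (1 : R) (fun v => 1 + (b + v) * v) (b + 2 * v).
    have : is_derive v (1 : R) (cst 1 + (cst b + id) * id)
        (0 + ((b + v) * 1 + v * (0 + 1))) by apply: is_deriveD; apply: is_deriveM.
    by move/is_derive_eq; apply; ring.
  have dq' : is_derive v (1 : R) (fun v => 1 - (b - v) * v) (2 * v - b).
    have : is_derive v (1 : R) (cst 1 - (cst b - id) * id)
        (0 - ((b - v) * 1 + v * (0 - 1))) by apply: is_deriveB; apply: is_deriveM.
    by move/is_derive_eq; apply; ring.
  have dl : is_derive v (1 : R) (fun v => b + v) 1.
    have : is_derive v (1 : R) (cst b + id) (0 + 1) by apply: is_deriveD.
    by move/is_derive_eq; apply; rewrite add0r.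
  have dl' : is_derive v (1 : R) (fun v => b - v) (-1).
    have : is_derive v (1 : R) (cst b - id) (0 - 1) by apply: is_deriveB.
    by move/is_derive_eq; apply; rewrite add0r.
  have := is_deriveB (is_deriveB (is_derive_ln_comp dq q_gt0)
      (is_derive_ln_comp dq' q'_gt0)) (is_deriveZ (b ^+ 2)
      (is_deriveB (is_derive_ln_comp dl bv_gt0) (is_derive_ln_comp dl' bv'_gt0))).
  by move/is_derive_eq; apply.
move=> /andP[v_gt0 v_lt]; have [] := pos v; first by rewrite !ltW.
move=> bv_gt0 bv'_gt0 q_gt0 q'_gt0.
have -> : dh v = 2 * b * v ^+ 2 * (b ^+ 4 - 3 * b ^+ 2 - 1 - (b ^+ 2 - 1) * v ^+ 2)
    / ((1 + (b + v) * v) * (1 - (b - v) * v) * (b + v) * (b - v)).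
  by rewrite /dh; field; rewrite !gt_eqF.
rewrite divr_gt0 ?mulr_gt0 ?exprn_gt0 //; first lra.
have b2_ge9 : 9 <= b ^+ 2 by nra.
have v2_le : v ^+ 2 <= 1 / 4 by nra.
nra.
Qed.

Lemma ln_ratio_pow_lt (b u a c q e : R) : b + u = pi * c -> b - u = pi * a ->
  1 < a -> 3 <= b -> 0 < u -> pi * u < q -> q * a < 1 -> e + 1 <= b ^+ 2 ->
  (e + 1) * (ln c - ln a) < ln (1 + q * c) - ln (1 - q * a).
Proof.
move=> ebu ebu' a_gt1 b_ge3 u_gt0 q_gt qa_lt1 e_le.
have pi_ge2 : 2 <= pi :> R := pi_ge2 R.
have a_gt0 : 0 < a by lra.
have q_gt0 : 0 < q by apply: lt_trans q_gt; rewrite mulr_gt0 ?pi_gt0.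
have bu_lt1 : (b - u) * u < 1.
  have : a * (pi * u) < a * q by rewrite ltr_pM2l.
  rewrite ebu'; lra.
have u_lt2 : 0 < u < 1 / 2.
  have : 2 < b - u by rewrite ebu'; nra.
  by rewrite u_gt0 /=; nra.
have c_gt_a : a < c by rewrite -(ltr_pM2l (pi_gt0 R)) -ebu -ebu'; lra.
have L_gt0 : 0 < ln c - ln a by rewrite subr_gt0 ltr_ln ?posrE //; lra.
have := sqr_mul_ln_ratio_lt b_ge3 u_lt2 bu_lt1.
have -> : ln (b + u) - ln (b - u) = ln c - ln a.
  by rewrite ebu ebu' !lnM ?posrE ?pi_gt0 //; [lra | lra].
have : (e + 1) * (ln c - ln a) <= b ^+ 2 * (ln c - ln a) by rewrite ler_pM2r.
have : ln (1 + (b + u) * u) <= ln (1 + q * c).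
  rewrite ler_ln ?posrE; [|nra|nra].
  by rewrite ebu lerD2l mulrAC ler_pM2r ?ltW //; lra.
have : ln (1 - q * a) <= ln (1 - (b - u) * u).
  rewrite ler_ln ?posrE ?subr_gt0 //.
  by rewrite ebu' lerD2l lerN2 mulrAC ler_pM2r // ltW.
lra.
Qed.

Lemma expR_mul_ln_ratio_lt (a c q e : R) : 0 < a -> 0 < c -> 0 < q ->
  q * a < 1 -> (e + 1) * (ln c - ln a) < ln (1 + q * c) - ln (1 - q * a) ->
  expR (e * (ln c - ln a)) * (1 / a - q) < q + 1 / c.
Proof.
move=> a_gt0 c_gt0 q_gt0 qa_lt1 hL.
have qc_gt0 : 0 < 1 + q * c by rewrite addr_gt0 ?mulr_gt0.
have qa_gt0 : 0 < 1 - q * a by rewrite subr_gt0.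
have : expR ((e + 1) * (ln c - ln a)) < (1 + q * c) / (1 - q * a).
  by rewrite -[X in _ < X]lnK ?posrE ?divr_gt0 // ltr_expR ln_div ?posrE.
rewrite mulrDl mul1r expRD expRD expRN !lnK ?posrE //.
set E := expR _ => ltE.
rewrite -(ltr_pM2r c_gt0).
have -> : (q + 1 / c) * c = 1 + q * c by field; rewrite gt_eqF.
have -> : E * (1 / a - q) * c = E * (c / a) * (1 - q * a) by field; rewrite gt_eqF.
by rewrite -ltr_pdivlMr.
Qed.

Definition psi_exp (K p z : R) : R :=
  expR (p * (ln (sin (pi * z)) - ln (K - z)))
  + expR (p * (ln (sin (pi * z)) - ln (K + z - 1))).

Definition psi_exp_deriv (K p z : R) : R :=
  expR (p * (ln (sin (pi * z)) - ln (K - z)))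
    * (p * (cos (pi * z) * pi / sin (pi * z) - (-1) / (K - z)))
  + expR (p * (ln (sin (pi * z)) - ln (K + z - 1)))
    * (p * (cos (pi * z) * pi / sin (pi * z) - 1 / (K + z - 1))).

Lemma sin_pi_gt0 (z : R) : 0 < z < 1 -> 0 < sin (pi * z).
Proof.
move=> /andP[z_gt0 z_lt1]; apply: sin_gt0_pi.
by rewrite mulr_gt0 ?pi_gt0 //= gtr_pMr ?pi_gt0.
Qed.

Lemma psiE (k : nat) (p z : R) : (0 < k)%N -> 0 < z < 1 ->
  psi k p z = psi_exp k%:R p z.
Proof.
move=> k_gt0 z01; have s_gt0 := sin_pi_gt0 z01; move: z01 => /andP[z_gt0 z_lt1].
have k_ge1 : 1 <= k%:R :> R by rewrite ler1n.
rewrite /psi /psi_exp /powR !gt_eqF ?div1r; [|lra|lra|by []].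
by rewrite -!expRN mulrDr -!expRD !mulrBr !(mulrC p).
Qed.

Lemma is_derive_psi_exp (K p z : R) : 1 <= K -> 0 < z < 1 ->
  is_derive z 1 (psi_exp K p) (psi_exp_deriv K p z).
Proof.
move=> K_ge1 z01; have s_gt0 := sin_pi_gt0 z01; move: z01 => /andP[z_gt0 z_lt1].
have dK : is_derive z (1 : R) (fun z => K - z) (-1).
  have : is_derive z (1 : R) (cst K - id) (0 - 1) by apply: is_deriveB.
  by move/is_derive_eq; apply; rewrite add0r.
have dK' : is_derive z (1 : R) (fun z => K + z - 1) 1.
  have : is_derive z (1 : R) (cst K + id - cst 1) (0 + 1 - 0) by apply: is_deriveB.
  by move/is_derive_eq; apply; rewrite add0r subr0.
have ds := is_derive_sin_scale pi z.
apply: is_deriveD; apply: is_derive_expR_ln_ratio => //=; lra.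
Qed.

Lemma psi_exp_deriv_lt0 (K p z : R) : 2 <= K -> 0 < p ->
  p + 1 <= (pi * (K - 1 / 2)) ^+ 2 -> 1 / 2 < z < 1 -> psi_exp_deriv K p z < 0.
Proof.
move=> K_ge2 p_gt0 hp /andP[z_gt z_lt1].
have pi_ge2 : 2 <= pi :> R := pi_ge2 R.
pose u := pi * (z - 1 / 2); pose b := pi * (K - 1 / 2).
pose a := K - z; pose c := K + z - 1.
have u_gt0 : 0 < u by rewrite mulr_gt0 //; lra.
have u_lt : u < pi / 2 by rewrite /u; nra.
have sinE : sin (pi * z) = cos u.
  by rewrite -sinDpihalf /u; congr sin; field.
have cosE : cos (pi * z) = - sin u.
  by rewrite -cosDpihalf /u; congr cos; field.
have cosu_gt0 : 0 < cos u by rewrite -sinE sin_pi_gt0 //; apply/andP; lra.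
have sinu_gt0 : 0 < sin u by rewrite sin_gt0_pi // u_gt0; lra.
pose q := pi * sin u / cos u.
have q_gt : pi * u < q.
  rewrite /q -mulrA ltr_pM2l ?pi_gt0 // ltr_pdivlMr //.
  by rewrite mul_cos_lt_sin // u_gt0; lra.
have a_gt0 : 0 < a by rewrite /a; lra.
have c_gt0 : 0 < c by rewrite /c; lra.
have -> : psi_exp_deriv K p z = p * expR (p * (ln (cos u) - ln c))
    * (expR (p * (ln c - ln a)) * (1 / a - q) - (q + 1 / c)).
  rewrite /psi_exp_deriv sinE cosE /q -/a -/c.
  have -> : p * (ln (cos u) - ln a) = p * (ln (cos u) - ln c) + p * (ln c - ln a) by ring.
  by rewrite expRD; field; rewrite !gt_eqF.
rewrite pmulr_rlt0 ?mulr_gt0 ?expR_gt0 // subr_lt0.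
have q_gt0 : 0 < q by rewrite divr_gt0 ?mulr_gt0 ?pi_gt0.
have qc_gt0 : 0 < q + 1 / c by rewrite addr_gt0 // divr_gt0.
case: (lerP (1 / a) q) => [qa_le|qa_lt].
  by rewrite (le_lt_trans _ qc_gt0) // mulr_ge0_le0 ?expR_ge0 // subr_le0.
have qa_lt1 : q * a < 1 by rewrite -ltr_pdivlMr.
apply: expR_mul_ln_ratio_lt => //.
apply: (@ln_ratio_pow_lt b u) => //.
- by rewrite /b /u /c; field.
- by rewrite /b /u /a; field.
- by rewrite /a; lra.
- by rewrite /b; nra.
Qed.

End psi_decreasing.

Theorem corollary2 (R : realType) (k : nat) (p : R)
  (hk : (2 <= k)%N) (hp1 : 1 < p)
  (hp2 : p <= pi ^+ 2 * (k%:R - 1 / 2) ^+ 2 - 1) :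
  forall x y : R, 1 / 2 <= x -> x < y -> y <= 1 -> psi k p y < psi k p x.
Proof.
move=> x y hx xy hy.
have k_gt0 : (0 < k)%N by apply: leq_trans hk.
have k_ge2 : 2 <= k%:R :> R by rewrite ler_nat.
have x01 : 0 < x < 1 by apply/andP; lra.
have [->|y_lt1] := eqVneq y 1.
  have -> : psi k p 1 = 0 by rewrite /psi mulr1 sinpi powR0 ?mul0r // gt_eqF //; lra.
  by rewrite psiE // addr_gt0 ?expR_gt0.
have y01 : 0 < y < 1 by rewrite [y < 1]lt_neqAle y_lt1 hy andbT; lra.
rewrite !psiE //.
apply: (@is_derive_lt0_gtr _ _ (psi_exp_deriv k%:R p)) => // [z z_in|z z_in].
  by apply: is_derive_psi_exp; [lra | apply/andP; lra].
apply: psi_exp_deriv_lt0 => //; [lra | rewrite exprMn; lra | apply/andP; lra].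
Qed.
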